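(* Let $y_1, \ldots, y_n \in \mathfrak m$ be a minimal system of generators of $\mathfrak m$, so $R = k[[y_1, \ldots, y_n]]$. Let $d = \max\{a_n + 1, c_R\}$ and let $\widetilde y_i$ be the truncation of $y_i$ at $t^d$, i.e. if $y_i = \sum_{j \ge 0} c_{i,j} t^j$ then $\widetilde y_i = \sum_{j < d} c_{i,j} t^j$. Then $R = k[[\widetilde y_1, \ldots, \widetilde y_n]]$. In particular, $R$ can always be generated (as $k[[\cdot]]$) by finitely many polynomials in $t$.
   Context: Let $k$ be a field and let $(R,\mathfrak m)$ be a complete local noetherian domain of dimension $1$ containing $k$ with $R/\mathfrak m = k$, with normalization $\overline R$ having residue field $k$, so $\overline R = k[[t]]$ and $R \subseteq k[[t]]$ is finite birational. Let $v$ be the $t$-adic valuation. For $A \subseteq k((t))$ let $v(A) = \{v(f): f\in A\setminus\{0\}\}$. The conductor is $\mathfrak C_R = \{x\in\overline R: x\overline R\subseteq R\} = t^{c_R}\overline R$, $c_R$ the conductor degree. The Herzog–Kunz sequence of $R$ is $v(\mathfrak m)\setminus v(\mathfrak m^2)$ listed increasingly as $a_1 < \cdots < a_n$ (with $n = \mathrm{edim}(R)$). For $y_i\in\mathfrak m$, $k[[y_1,\ldots,y_n]]$ is the image of $k[[Y_1,\ldots,Y_n]]\to k[[t]]$, $Y_i\mapsto y_i$. *)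

(* Formal power series k[[t]] over a field k are modelled as
   coefficient functions nat -> k; subrings of k[[t]] as predicates. *)
From mathcomp Require Import all_boot all_order all_algebra.
Set Implicit Arguments. Unset Strict Implicit. Unset Printing Implicit Defensive.
Import GRing.Theory.
Local Open Scope ring_scope.

Section PS.
Variable k : fieldType.

Definition ps := nat -> k.

Definition pseq (f g : ps) : Prop := forall j, f j = g j.
Definition psnz (f : ps) : Prop := exists j, f j != 0.
Definition psadd (f g : ps) : ps := fun j => f j + g j.
Definition psopp (f : ps) : ps := fun j => - f j.
Definition psmul (f g : ps) : ps := fun j => \sum_(i < j.+1) f i * g (j - i)%N.
Definition pscst (c : k) : ps := fun j => if j == 0%N then c else 0.
Definition pspow (f : ps) (e : nat) : ps := iter e (psmul f) (pscst 1).

Definition has_val (f : ps) (b : nat) : Prop :=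
  f b != 0 /\ forall j, (j < b)%N -> f j = 0.
Definition vset (A : ps -> Prop) (b : nat) : Prop := exists f, A f /\ has_val f b.

Definition is_ksubalg (R : ps -> Prop) : Prop :=
  [/\ forall c, R (pscst c),
      forall f g, R f -> R g -> R (psadd f g),
      forall f, R f -> R (psopp f),
      forall f g, R f -> R g -> R (psmul f g)
    & forall f g, pseq f g -> R f -> R g].

Definition finite_over (R : ps -> Prop) : Prop :=
  exists (m : nat) (g : 'I_m -> ps), forall f : ps,
    exists r : 'I_m -> ps, (forall i, R (r i)) /\
      pseq f (fun j => \sum_(i < m) psmul (r i) (g i) j).

(* k[[t]] is contained in the fraction field of R (R -> k[[t]] birational) *)
Definition birational (R : ps -> Prop) : Prop :=
  forall f : ps, exists a b, [/\ R a, R b, psnz b & pseq (psmul b f) a].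

Definition fin_birat_subalg (R : ps -> Prop) : Prop :=
  [/\ is_ksubalg R, finite_over R & birational R].

Definition maxid (R : ps -> Prop) (f : ps) : Prop := R f /\ f 0%N = 0.

Definition maxid2 (R : ps -> Prop) (f : ps) : Prop :=
  exists (N : nat) (x z : 'I_N -> ps),
    (forall l, maxid R (x l)) /\ (forall l, maxid R (z l)) /\
    pseq f (fun j => \sum_(l < N) psmul (x l) (z l) j).

Definition ideal_gen (R : ps -> Prop) (n : nat) (P : pred 'I_n)
    (y : 'I_n -> ps) (f : ps) : Prop :=
  exists r : 'I_n -> ps, (forall i, R (r i)) /\
    pseq f (fun j => \sum_(i < n | P i) psmul (r i) (y i) j).

Definition min_gens (R : ps -> Prop) (n : nat) (y : 'I_n -> ps) : Prop :=
  [/\ forall i, maxid R (y i),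
      forall f, maxid R f <-> ideal_gen R predT y f
    & forall i0 : 'I_n, ~ (forall f, maxid R f <-> ideal_gen R (predC1 i0) y f)].

Definition conductor (R : ps -> Prop) (x : ps) : Prop :=
  forall g, R (psmul x g).

Definition conductor_degree (R : ps -> Prop) (c : nat) : Prop :=
  forall x, conductor R x <-> (forall j, (j < c)%N -> x j = 0).

Definition HK (R : ps -> Prop) (b : nat) : Prop :=
  vset (maxid R) b /\ ~ vset (maxid2 R) b.

Definition HK_last (R : ps -> Prop) (a : nat) : Prop :=
  HK R a /\ forall b, HK R b -> (b <= a)%N.

Definition psmonom (n : nat) (y : 'I_n -> ps) (al : {ffun 'I_n -> nat}) : ps :=
  \big[psmul/pscst 1]_(i < n) pspow (y i) (al i).

(* F(y_1,...,y_n) for F in k[[Y_1..Y_n]] (coefficients F al), y_i in t k[[t]]: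
   the coefficient of t^j only involves monomials of total degree <= j. *)
Definition pssubst (n : nat) (F : {ffun 'I_n -> nat} -> k) (y : 'I_n -> ps) : ps :=
  fun j => \sum_(al : {ffun 'I_n -> 'I_j.+1} | (\sum_(i < n) (al i : nat) <= j)%N)
             F [ffun i => (al i : nat)] * psmonom y [ffun i => (al i : nat)] j.

Definition in_kser (n : nat) (y : 'I_n -> ps) (f : ps) : Prop :=
  exists F : {ffun 'I_n -> nat} -> k, pseq f (pssubst F y).

Definition trunc (d : nat) (f : ps) : ps := fun j => if (j < d)%N then f j else 0.

Definition is_poly (f : ps) : Prop := exists D, forall j, (D <= j)%N -> f j = 0.

End PS.

(* Since [d > a_n], every valuation [N >= d] of an element of [m] is a valuation of
   an element of [m^2]; subtracting such elements one order at a time (the conductor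
   absorbs everything beyond [2 c]) shows that every series divisible by [t^d] lies
   in [m (y_1, ..., y_n)]. Hence [y_i - yt_i = \sum_j S_ij y_j] with [S_ij ∈ m], so
   [yt = (1 - S) y] where [det (1 - S)] is a unit of [R], and the truncations [yt_i]
   again generate [m]. Any generators [z] of [m] present [R] as [k[[z]]]: an element
   of [R] is expanded degree by degree, the remainder after degree [e] lying in
   [m^(e+1)], whose elements are divisible by [t^(e+1)]; conversely [F(z)] agrees
   modulo [t^c] with a polynomial in the [z_i], so it lies in [R]. *)

From HB Require Import structures.
From mathcomp Require Import all_boot all_order all_algebra.
From mathcomp Require Import boolp zify.
Set Implicit Arguments. Unset Strict Implicit. Unset Printing Implicit Defensive.
Import GRing.Theory.
Local Open Scope ring_scope.

Section SeriesRing.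
Variable k : fieldType.
Implicit Types f g h : ps k.

(* The ring laws are transported from [{poly k}]: coefficient [j] of a product only
   depends on the coefficients of the factors up to [j]. *)
Definition ps_poly (N : nat) (f : ps k) : {poly k} := \poly_(i < N) f i.

Lemma psmul_poly f g N j : (j < N)%N -> psmul f g j = (ps_poly N f * ps_poly N g)`_j.
Proof.
move=> jN; rewrite coefM; apply: eq_bigr => i _.
have ij : (i <= j)%N by rewrite -ltnS.
by rewrite !coef_poly (leq_ltn_trans ij jN) (leq_ltn_trans (leq_subr i j) jN).
Qed.

Lemma ps_poly_mul f g N j : (j < N)%N ->
  (ps_poly N (psmul f g))`_j = (ps_poly N f * ps_poly N g)`_j.
Proof. by move=> jN; rewrite coef_poly jN (psmul_poly _ _ jN). Qed.

Lemma coefM_eq (p p' q q' : {poly k}) j :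
    (forall i, (i <= j)%N -> p`_i = p'`_i) -> (forall i, (i <= j)%N -> q`_i = q'`_i) ->
  (p * q)`_j = (p' * q')`_j.
Proof.
move=> Hp Hq; rewrite !coefM; apply: eq_bigr => i _.
by rewrite Hp ?Hq ?leq_subr // -ltnS.
Qed.

Lemma psmulA : associative (@psmul k).
Proof.
move=> f g h; apply: funext => j; set N := j.+1.
rewrite !(psmul_poly _ _ (ltnSn j)).
rewrite (@coefM_eq _ (ps_poly N f) _ (ps_poly N g * ps_poly N h)) => //; last first.
  by move=> i ij; rewrite ps_poly_mul.
rewrite (@coefM_eq _ (ps_poly N f * ps_poly N g) (ps_poly N h) (ps_poly N h)) ?mulrA //.
by move=> i ij; rewrite ps_poly_mul.
Qed.

Lemma psmulC : commutative (@psmul k).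
Proof. by move=> f g; apply: funext => j; rewrite !(psmul_poly _ _ (ltnSn j)) mulrC. Qed.

Lemma psmul1 : left_id (pscst 1) (@psmul k).
Proof.
move=> f; apply: funext => j; rewrite (psmul_poly _ _ (ltnSn j)).
rewrite (@coefM_eq _ 1 _ (ps_poly j.+1 f)) ?mul1r ?coef_poly ?ltnSn // => i ij.
by rewrite coef_poly coef1 ltnS ij /pscst; case: (i == 0%N).
Qed.

Lemma psmulDl : left_distributive (@psmul k) (@psadd k).
Proof.
move=> f g h; apply: funext => j; rewrite /psadd !(psmul_poly _ _ (ltnSn j)).
rewrite -coefD -mulrDl; apply: coefM_eq => // i ij.
by rewrite coefD !coef_poly ltnS ij.
Qed.

Definition ps0 : ps k := fun=> 0.

Lemma psaddA : associative (@psadd k).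
Proof. by move=> f g h; apply: funext => j; rewrite /psadd addrA. Qed.
Lemma psaddC : commutative (@psadd k).
Proof. by move=> f g; apply: funext => j; rewrite /psadd addrC. Qed.
Lemma psadd0 : left_id ps0 (@psadd k).
Proof. by move=> f; apply: funext => j; rewrite /psadd add0r. Qed.
Lemma psaddN : left_inverse ps0 (@psopp k) (@psadd k).
Proof. by move=> f; apply: funext => j; rewrite /psadd /psopp addNr. Qed.
Lemma pscst1_neq0 : pscst 1 != ps0.
Proof. by apply/eqP => /(congr1 (fun f => f 0%N)); apply/eqP/oner_neq0. Qed.

End SeriesRing.

HB.instance Definition _ (k : fieldType) := Choice.copy (ps k) (nat -> k).
HB.instance Definition _ (k : fieldType) := GRing.isZmodule.Build (ps k)
  (@psaddA k) (@psaddC k) (@psadd0 k) (@psaddN k).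
HB.instance Definition _ (k : fieldType) := GRing.Zmodule_isComNzRing.Build (ps k)
  (@psmulA k) (@psmulC k) (@psmul1 k) (@psmulDl k) (@pscst1_neq0 k).


Section SeriesCoef.
Variable k : fieldType.
Implicit Types f g h : ps k.

Lemma pscoefD f g j : (f + g) j = f j + g j. Proof. by []. Qed.
Lemma pscoefN f j : (- f) j = - f j. Proof. by []. Qed.
Lemma pscoefB f g j : (f - g) j = f j - g j. Proof. by []. Qed.
Lemma pscoefM f g j : (f * g) j = \sum_(i < j.+1) f i * g (j - i)%N. Proof. by []. Qed.
Lemma pscoef1 j : (1 : ps k) j = (j == 0%N)%:R.
Proof. by rewrite [LHS]/(pscst 1 j) /pscst; case: (j == 0%N). Qed.
Lemma pscoef_sum (I : Type) (r : seq I) (P : pred I) (F : I -> ps k) j :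
  (\sum_(i <- r | P i) F i) j = \sum_(i <- r | P i) F i j.
Proof. by elim/big_rec2: _ => // i a b _ <-. Qed.

Lemma pscoefM0 f g : (f * g) 0%N = f 0%N * g 0%N.
Proof. by rewrite pscoefM big_ord1. Qed.

Lemma pscoefM_eq f f' g g' j :
    (forall i, (i <= j)%N -> f i = f' i) -> (forall i, (i <= j)%N -> g i = g' i) ->
  (f * g) j = (f' * g') j.
Proof.
move=> Hf Hg; rewrite !pscoefM; apply: eq_bigr => i _.
by rewrite Hf ?Hg ?leq_subr // -ltnS.
Qed.

Lemma pscst_is_zmod_morphism : zmod_morphism (@pscst k).
Proof.
by move=> a b; apply: funext => j; rewrite pscoefB /pscst; case: ifP; rewrite ?subr0.
Qed.
Lemma pscst_is_monoid_morphism : monoid_morphism (@pscst k).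
Proof.
split=> // a b; apply: funext => j.
rewrite pscoefM big_ord_recl big1 ?addr0 => [|i _]; last by rewrite /pscst mul0r.
by rewrite subn0 /pscst; case: ifP; rewrite ?mulr0.
Qed.
HB.instance Definition _ := GRing.isZmodMorphism.Build k (ps k) (@pscst k)
  pscst_is_zmod_morphism.
HB.instance Definition _ := GRing.isMonoidMorphism.Build k (ps k) (@pscst k)
  pscst_is_monoid_morphism.

Lemma pscoefCM (e : k) f j : (pscst e * f) j = e * f j.
Proof.
rewrite pscoefM big_ord_recl big1 ?addr0 ?subn0 // => i _.
by rewrite /pscst mul0r.
Qed.

Definition coef0 (f : ps k) : k := f 0%N.
Lemma coef0_is_zmod_morphism : zmod_morphism coef0. Proof. by []. Qed.
Lemma coef0_is_monoid_morphism : monoid_morphism coef0.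
Proof. by split=> [|f g]; [rewrite /coef0 pscoef1 | exact: pscoefM0]. Qed.
HB.instance Definition _ := GRing.isZmodMorphism.Build (ps k) k coef0
  coef0_is_zmod_morphism.
HB.instance Definition _ := GRing.isMonoidMorphism.Build (ps k) k coef0
  coef0_is_monoid_morphism.

Definition tdvd (N : nat) f := forall j, (j < N)%N -> f j = 0.

Lemma tdvdW M N f : (M <= N)%N -> tdvd N f -> tdvd M f.
Proof. by move=> MN Hf j jM; apply: Hf (leq_trans jM MN). Qed.
Lemma tdvdD N f g : tdvd N f -> tdvd N g -> tdvd N (f + g).
Proof. by move=> Hf Hg j jN; rewrite pscoefD Hf ?Hg ?addr0. Qed.
Lemma tdvdN N f : tdvd N f -> tdvd N (- f).
Proof. by move=> Hf j jN; rewrite pscoefN Hf ?oppr0. Qed.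
Lemma tdvdB N f g : tdvd N f -> tdvd N g -> tdvd N (f - g).
Proof. by move=> Hf Hg; apply/tdvdD/tdvdN. Qed.
Lemma tdvd_sum N (I : Type) (r : seq I) (P : pred I) (F : I -> ps k) :
  (forall i, P i -> tdvd N (F i)) -> tdvd N (\sum_(i <- r | P i) F i).
Proof. by move=> H; elim/big_ind: _ => //; exact: tdvdD. Qed.

Lemma tdvdS N f : tdvd N f -> f N = 0 -> tdvd N.+1 f.
Proof. by move=> Hf fN j; rewrite ltnS leq_eqVlt => /predU1P [->|/Hf]. Qed.

Lemma tdvdM M N f g : tdvd M f -> tdvd N g -> tdvd (M + N) (f * g).
Proof.
move=> Hf Hg j jMN; rewrite pscoefM big1 // => i _.
have [iM|Mi] := ltnP i M; first by rewrite Hf ?mul0r.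
have ij : (i <= j)%N by rewrite -ltnS.
by rewrite Hg ?mulr0 //; lia.
Qed.
Lemma tdvdX f e : tdvd 1 f -> tdvd e (f ^+ e).
Proof.
move=> Hf; elim: e => [|e IH]; first by [].
by rewrite exprS -add1n; apply: tdvdM.
Qed.
Lemma tdvd_prod (I : Type) (r : seq I) (F : I -> ps k) (a : I -> nat) :
  (forall i, tdvd (a i) (F i)) -> tdvd (\sum_(i <- r) a i) (\prod_(i <- r) F i).
Proof.
move=> H; elim: r => [|x r IH]; first by rewrite !big_nil.
by rewrite !big_cons; apply: tdvdM.
Qed.

Lemma tdvd1_coef0 f : tdvd 1 f <-> f 0%N = 0.
Proof. by split=> [|f0 j]; [apply | rewrite ltnS leqn0 => /eqP ->]. Qed.

Definition tpow (m : nat) : ps k := fun j => (j == m)%:R.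

Lemma pscoef_tpowM m f j : (tpow m * f) j = if (m <= j)%N then f (j - m)%N else 0.
Proof.
rewrite pscoefM; case: ifPn => [mj|]; last first.
  rewrite -ltnNge => jm; rewrite big1 // => i _.
  by rewrite /tpow ltn_eqF ?mul0r // (leq_trans (ltn_ord i)).
rewrite (bigD1 (Ordinal (mj : (m < j.+1)%N))) //= /tpow eqxx mul1r big1 ?addr0 //.
move=> i /eqP ne; suff /negbTE -> : (i : nat) != m by rewrite mul0r.
by apply/eqP => im; apply: ne; apply: val_inj.
Qed.

Lemma tdvd_tpowM m f : tdvd m f -> f = tpow m * (fun j => f (j + m)%N).
Proof.
move=> Hf; apply: funext => j; rewrite pscoef_tpowM.
by case: leqP => [mj|jm]; [rewrite subnK | rewrite Hf].
Qed.

Lemma tdvd_tpow m : tdvd m (tpow m).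
Proof. by move=> j jm; rewrite /tpow ltn_eqF. Qed.

Lemma psmonomE n (z : 'I_n -> ps k) al : psmonom z al = \prod_(i < n) z i ^+ al i.
Proof.
apply: eq_bigr => i _; rewrite /pspow.
by elim: (al i) => [|e IH] //=; rewrite IH exprS.
Qed.

End SeriesCoef.

Section KSubalgebra.
Variable k : fieldType.
Variable R : ps k -> Prop.
Hypothesis HR : is_ksubalg R.
Implicit Types f g h : ps k.

Lemma ksub_cst e : R (pscst e). Proof. by case: HR. Qed.
Lemma ksubD f g : R f -> R g -> R (f + g). Proof. by case: HR => _ H _ _ _; apply: H. Qed.
Lemma ksubN f : R f -> R (- f). Proof. by case: HR => _ _ H _ _; apply: H. Qed.
Lemma ksubM f g : R f -> R g -> R (f * g). Proof. by case: HR => _ _ _ H _; apply: H. Qed.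
Lemma ksub_pseq f g : pseq f g -> R f -> R g.
Proof. by case: HR => _ _ _ _ H; apply: H. Qed.

Lemma ksub0 : R 0. Proof. by rewrite -(rmorph0 (@pscst k)); apply: ksub_cst. Qed.
Lemma ksub1 : R 1. Proof. exact: ksub_cst. Qed.
Lemma ksubB f g : R f -> R g -> R (f - g). Proof. by move=> Rf Rg; apply/ksubD/ksubN. Qed.
Lemma ksubX f e : R f -> R (f ^+ e).
Proof. by move=> Rf; elim: e => [|e IH]; [exact: ksub1 | rewrite exprS; apply: ksubM]. Qed.
Lemma ksub_nat m : R m%:R.
Proof. by rewrite -(rmorph_nat (@pscst k)); apply: ksub_cst. Qed.
Lemma ksub_sum (I : Type) (r : seq I) (P : pred I) (F : I -> ps k) :
  (forall i, P i -> R (F i)) -> R (\sum_(i <- r | P i) F i).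
Proof. by move=> H; elim/big_ind: _ => //; [exact: ksub0 | exact: ksubD]. Qed.
Lemma ksub_prod (I : Type) (r : seq I) (P : pred I) (F : I -> ps k) :
  (forall i, P i -> R (F i)) -> R (\prod_(i <- r | P i) F i).
Proof. by move=> H; elim/big_ind: _ => //; [exact: ksub1 | exact: ksubM]. Qed.

Lemma ksub_psmonom n (z : 'I_n -> ps k) al : (forall i, R (z i)) -> R (psmonom z al).
Proof. by move=> Rz; rewrite psmonomE; apply: ksub_prod => i _; apply: ksubX. Qed.

Lemma ksub_det m (A : 'M[ps k]_m) : (forall i j, R (A i j)) -> R (\det A).
Proof.
move=> RA; apply: ksub_sum => s _; apply: ksubM; last exact: ksub_prod.
by apply/ksubX/ksubN/ksub1.
Qed.

Lemma ksub_adj m (A : 'M[ps k]_m) i j : (forall i j, R (A i j)) -> R (\adj A i j).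
Proof.
move=> RA; rewrite mxE /cofactor; apply: ksubM; first by apply/ksubX/ksubN/ksub1.
by apply: ksub_det => i' j'; rewrite !mxE.
Qed.

Lemma maxidM f g : R f -> maxid R g -> maxid R (f * g).
Proof. by move=> Rf [Rg g0]; split; [apply: ksubM | rewrite pscoefM0 g0 mulr0]. Qed.

Variable c : nat.
Hypothesis Hc : conductor_degree R c.

Lemma conductor_mem f : tdvd c f -> R f.
Proof. by move=> /(Hc f) Cf; rewrite -[f]mulr1; apply: Cf. Qed.

Lemma ksub_eq_mod_conductor f g : tdvd c (f - g) -> R g -> R f.
Proof. by move=> fg Rg; rewrite -(subrK g f); apply/ksubD/Rg/conductor_mem. Qed.

(* With [x = 1 - u], the inverse [\sum_i x^i] has the same coefficient [j] as the
   partial sum [P (j+1)], and differs from [P c] by a multiple of [t^c]. *)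
Lemma ksub_unit u : R u -> u 0%N = 1 -> exists2 w, R w & u * w = 1.
Proof.
move=> Ru u0; set x := 1 - u.
have x0 : tdvd 1 x by apply/tdvd1_coef0; rewrite /x pscoefB pscoef1 u0 subrr.
pose P K := \sum_(i < K) x ^+ i.
have RPc : R (P c) by apply: ksub_sum => i _; apply/ksubX/ksubB/Ru/ksub1.
have P_stable j K : (j < K)%N -> P K j = P j.+1 j.
  move=> /subnKC <-; elim: (K - j.+1)%N => [|m IH]; first by rewrite addn0.
  rewrite addnS {1}/P big_ord_recr /= -/(P _) pscoefD IH tdvdX ?addr0 //.
  by rewrite ltnS leq_addr.
pose w : ps k := fun j => P j.+1 j.
exists w.
  by apply: (@ksub_eq_mod_conductor _ (P c)) => // j jc; rewrite pscoefB P_stable ?subrr.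
apply: funext => j; rewrite (@pscoefM_eq _ u u w (P j.+1)) // => [|i ij]; last first.
  by rewrite /w P_stable.
have -> : u * P j.+1 = 1 - x ^+ j.+1.
  have {1}-> : u = 1 - x by rewrite opprB addrC subrK.
  by rewrite -[RHS]opprB subrX1 -mulNr [- (x - 1)]opprB.
by rewrite pscoefB tdvdX ?subr0.
Qed.

End KSubalgebra.

Lemma adj_solve (A : comNzRingType) n (M : 'M[A]_n) (y z : 'I_n -> A) w :
    \det M * w = 1 -> (forall i, z i = \sum_l M i l * y l) ->
  forall i, y i = \sum_l w * \adj M i l * z l.
Proof.
move=> Mw Mz i.
have adjM m : \sum_l \adj M i l * M l m = (\det M) *+ (i == m).
  by have := congr1 (fun B : 'M[A]_n => B i m) (mul_adj_mx M); rewrite !mxE.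
have adjMz : \sum_l \adj M i l * z l = \det M * y i.
  under eq_bigr => l _ do rewrite Mz mulr_sumr.
  under eq_bigr do under eq_bigr do rewrite mulrA.
  rewrite exchange_big /=; under eq_bigr => m _ do rewrite -mulr_suml adjM.
  rewrite (bigD1 i) //= eqxx mulr1n big1 ?addr0 // => m mi.
  by rewrite eq_sym (negbTE mi) mulr0n mul0r.
rewrite -[y i]mul1r -Mw (mulrC (\det M)) -mulrA -adjMz mulr_sumr.
by apply: eq_bigr => l _; rewrite mulrA.
Qed.

Section TruncatedGenerators.
Variable k : fieldType.
Variable R : ps k -> Prop.
Variable n : nat.
Variable y : 'I_n -> ps k.
Variables c a : nat.
Hypothesis HR : is_ksubalg R.
Hypothesis Hmin : min_gens R y.
Hypothesis Hc : conductor_degree R c.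
Hypothesis Ha : HK_last R a.
Implicit Types f g h q : ps k.

Local Notation d := (maxn a.+1 c).

Lemma maxid_gen i : maxid R (y i).
Proof. by case: Hmin. Qed.

Lemma maxid_gensP f :
  maxid R f -> exists2 r : 'I_n -> ps k, forall i, R (r i) & f = \sum_i r i * y i.
Proof.
case: Hmin => _ /(_ f) [+ _] _ => /[apply] -[r [Rr Hf]]; exists r => //.
by apply: funext => j; rewrite Hf pscoef_sum.
Qed.

Definition in_mgens g :=
  exists2 s : 'I_n -> ps k, forall i, maxid R (s i) & g = \sum_i s i * y i.

Lemma in_mgens0 : in_mgens 0.
Proof.
exists (fun=> 0); last by rewrite big1 // => i _; rewrite mul0r.
by move=> i; split; [exact: ksub0|].
Qed.

Lemma in_mgensD f g : in_mgens f -> in_mgens g -> in_mgens (f + g).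
Proof.
move=> [s Hs ->] [s' Hs' ->]; exists (fun i => s i + s' i); last first.
  by rewrite -big_split; apply: eq_bigr => i _; rewrite mulrDl.
move=> i; have [Rs s0] := Hs i; have [Rs' s'0] := Hs' i.
by split; [apply: ksubD | rewrite pscoefD s0 s'0 addr0].
Qed.

Lemma in_mgensCM e g : in_mgens g -> in_mgens (pscst e * g).
Proof.
move=> [s Hs ->]; exists (fun i => pscst e * s i); last first.
  by rewrite mulr_sumr; apply: eq_bigr => i _; rewrite mulrA.
by move=> i; apply: maxidM => //; apply: ksub_cst.
Qed.

Lemma in_mgensM f g : maxid R f -> maxid R g -> in_mgens (f * g).
Proof.
move=> mf /maxid_gensP [r Rr ->]; exists (fun i => f * r i); last first.
  by rewrite mulr_sumr; apply: eq_bigr => i _; rewrite mulrA.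
by move=> i; rewrite mulrC; apply: maxidM; case: mf.
Qed.

Lemma maxid2_in_mgens q : maxid2 R q -> in_mgens q.
Proof.
move=> [N [x [z [mx [mz Hq]]]]].
have -> : q = \sum_(l < N) x l * z l by apply: funext => j; rewrite Hq pscoef_sum.
by elim/big_ind: _ => [|f g|l _]; [exact: in_mgens0 | exact: in_mgensD | exact: in_mgensM].
Qed.

(* With [c' = max c 1], [g = t^c' g'] where [g' ∈ m] and [t^c'] lies in the
   conductor. *)
Lemma tdvd_in_mgens_large g : tdvd (maxn c 1 + maxn c 1) g -> in_mgens g.
Proof.
set c' := maxn c 1 => Hg; rewrite (tdvd_tpowM (tdvdW (leq_addl _ _) Hg)).
set g' := fun j => g (j + c')%N.
have g'c' : tdvd c' g' by move=> j jc; apply: Hg; rewrite ltn_add2r.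
have mg' : maxid R g'.
  split; first by apply: conductor_mem Hc _ (tdvdW (leq_maxl c 1) g'c').
  exact: g'c' (leq_maxr c 1).
have [r Rr ->] := maxid_gensP mg'.
exists (fun i => tpow k c' * r i); last first.
  by rewrite mulr_sumr; apply: eq_bigr => i _; rewrite mulrA.
have Ct : conductor R (tpow k c') by apply/Hc/(tdvdW (leq_maxl c 1))/tdvd_tpow.
move=> i; split; first exact: Ct.
by rewrite pscoefM0 (@tdvd_tpow k c') ?mul0r // leq_maxr.
Qed.

Lemma HK_vset_large N : (d <= N)%N -> vset (maxid R) N -> vset (maxid2 R) N.
Proof.
move=> dN vN; apply: contrapT => nvN.
have [_ /(_ N (conj vN nvN))] := Ha.
by apply/negP; rewrite -ltnNge (leq_trans _ dN) // leq_max ltnSn.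
Qed.

(* Descending induction on the order [N] of [g], from [2 c'] down to [d]: if
   [g N != 0] then [N] is in [v(m)] but, as [N > a_n], not in the Herzog-Kunz set,
   so some [q ∈ m^2] has valuation [N] and [g - e q] has larger order. *)
Lemma tdvd_in_mgens g : tdvd d g -> in_mgens g.
Proof.
move: g; suff down m N : (maxn c 1 + maxn c 1 - N = m)%N -> (d <= N)%N ->
    forall g, tdvd N g -> in_mgens g by exact: down.
elim: m N => [|m IH] N Nm dN g Ng.
  by apply: tdvd_in_mgens_large; apply: tdvdW Ng; lia.
have [gN|gN] := eqVneq (g N) 0.
  by apply: (IH N.+1); [lia | lia | exact: tdvdS].
have mg : maxid R g.
  split; first by apply: conductor_mem Hc _ (tdvdW (leq_trans (leq_maxr _ _) dN) Ng).
  by apply: Ng; apply: leq_trans dN; rewrite leq_max ltnS leq0n.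
have [q [mq [qN Nq]]] := HK_vset_large dN (ex_intro _ g (conj mg (conj gN Ng))).
set e := g N / q N.
rewrite -(subrK (pscst e * q) g); apply: in_mgensD; last first.
  by apply/in_mgensCM/maxid2_in_mgens.
apply: (IH N.+1); [lia | lia | apply: tdvdS].
  by apply: tdvdB => // j jN; rewrite pscoefCM Nq ?mulr0.
by rewrite pscoefB pscoefCM /e divfK ?subrr.
Qed.

Local Notation yt i := (trunc d (y i)).

Lemma tdvd_sub_trunc i : tdvd d (y i - yt i).
Proof. by move=> j jd; rewrite pscoefB /trunc jd subrr. Qed.

Lemma ksub_trunc i : R (yt i).
Proof.
apply: (ksub_eq_mod_conductor HR Hc) (proj1 (maxid_gen i)).
rewrite -opprB; apply/tdvdN/(tdvdW (leq_maxr _ _))/tdvd_sub_trunc.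
Qed.

Lemma trunc_coef0 i : yt i 0%N = 0.
Proof. by rewrite /trunc leq_max ltnS leq0n; case: (maxid_gen i). Qed.

(* Writing [y_i - yt_i = \sum_l S_il y_l] with [S_il ∈ m] gives [yt = (1 - S) y], and
   [det (1 - S)] has constant coefficient [1], hence is a unit of [R]. *)
Lemma gen_in_trunc_span i :
  exists2 b : 'I_n -> ps k, forall l, R (b l) & y i = \sum_l b l * yt l.
Proof.
have /choice [S HS] i' : exists S : 'I_n -> ps k,
    (forall l, maxid R (S l)) /\ y i' - yt i' = \sum_l S l * y l.
  by have [S mS eS] := tdvd_in_mgens (tdvd_sub_trunc i'); exists S.
pose M : 'M[ps k]_n := \matrix_(i', l) ((i' == l)%:R - S i' l).
have RM i' l : R (M i' l).
  by rewrite mxE; apply: ksubB => //; [exact: ksub_nat | case: (proj1 (HS i') l)].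
have yt_M i' : yt i' = \sum_l M i' l * y l.
  under eq_bigr => l _ do rewrite mxE mulrBl.
  rewrite sumrB; have -> : \sum_l (i' == l)%:R * y l = y i'.
    rewrite (bigD1 i') //= eqxx mul1r big1 ?addr0 // => l il.
    by rewrite eq_sym (negbTE il) mul0r.
  by rewrite -(proj2 (HS i')) opprB addrC subrK.
have detM0 : (\det M) 0%N = 1.
  rewrite -[_ 0%N]/(@coef0 k (\det M)) -det_map_mx.
  suff -> : map_mx (@coef0 k) M = 1%:M by rewrite det1.
  apply/matrixP => i' l; rewrite !mxE rmorphB rmorph_nat /=.
  by rewrite /coef0 (proj2 (proj1 (HS i') l)) subr0.
have [w Rw Mw] := ksub_unit HR Hc (ksub_det HR RM) detM0.
exists (fun l => w * \adj M i l); last exact: adj_solve.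
by move=> l; exact: (ksubM HR Rw (ksub_adj HR i l RM)).
Qed.

Lemma maxid_truncP f :
  maxid R f -> exists2 r : 'I_n -> ps k, forall i, R (r i) & f = \sum_i r i * yt i.
Proof.
move=> /maxid_gensP [r Rr ->].
have /choice [B HB] i : exists B : 'I_n -> ps k,
    (forall l, R (B l)) /\ y i = \sum_l B l * yt l.
  by have [B RB eB] := gen_in_trunc_span i; exists B.
exists (fun l => \sum_i r i * B i l).
  by move=> l; apply: (ksub_sum HR) => i _; exact: (ksubM HR (Rr i) (proj1 (HB i) l)).
under eq_bigr => i _ do rewrite (proj2 (HB i)) mulr_sumr.
rewrite exchange_big /=; apply: eq_bigr => l _.
by rewrite mulr_suml; apply: eq_bigr => i _; rewrite mulrA.
Qed.

End TruncatedGenerators.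

Section Substitution.
Variable k : fieldType.
Variable n : nat.
Variable z : 'I_n -> ps k.
Hypothesis z0 : forall i, z i 0%N = 0.

Local Notation mono := {ffun 'I_n -> nat}.

Definition mdeg (al : mono) : nat := \sum_i al i.
Definition nat_ffun B (al : {ffun 'I_n -> 'I_B}) : mono := [ffun i => val (al i)].

Lemma mdeg_ge (al : mono) i : (al i <= mdeg al)%N.
Proof. by rewrite /mdeg (bigD1 i) //= leq_addr. Qed.

Lemma tdvd_psmonom al : tdvd (mdeg al) (psmonom z al).
Proof. by rewrite psmonomE; apply: tdvd_prod => i; apply/tdvdX/tdvd1_coef0. Qed.

(* The monomials of degree [< B] of [F(z)]: only those contribute below [t^B]. *)
Definition subst_poly B (F : mono -> k) : ps k :=
  \sum_(al : {ffun 'I_n -> 'I_B} | (mdeg (nat_ffun al) < B)%N)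
    pscst (F (nat_ffun al)) * psmonom z (nat_ffun al).

Lemma sum_ffun_narrow (V : nmodType) B D (phi : mono -> V) : (D < B)%N ->
  \sum_(al : {ffun 'I_n -> 'I_B} | (mdeg (nat_ffun al) <= D)%N) phi (nat_ffun al) =
  \sum_(al : {ffun 'I_n -> 'I_D.+1} | (mdeg (nat_ffun al) <= D)%N) phi (nat_ffun al).
Proof.
move=> DB.
pose widen (be : {ffun 'I_n -> 'I_D.+1}) := [ffun i => widen_ord DB (be i)].
pose narrow (al : {ffun 'I_n -> 'I_B}) : {ffun 'I_n -> 'I_D.+1} := [ffun i => inord (al i)].
have val_widen be : nat_ffun (widen be) = nat_ffun be by apply/ffunP => i; rewrite !ffunE.
rewrite (reindex_onto widen narrow) => [|al Hal]; last first.
  apply/ffunP => i; apply: val_inj; rewrite !ffunE /= inordK // ltnS.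
  by apply: leq_trans Hal; have := mdeg_ge (nat_ffun al) i; rewrite ffunE.
apply: eq_big => be; last by rewrite val_widen.
rewrite val_widen; case: (mdeg _ <= D)%N => //=.
by apply/eqP/ffunP => i; apply: val_inj; rewrite !ffunE /= inordK.
Qed.

Lemma pssubst_poly F B j : (j < B)%N -> pssubst F z j = subst_poly B F j.
Proof.
move=> jB; rewrite /subst_poly pscoef_sum.
under eq_bigr => al _ do rewrite pscoefCM.
rewrite big_mkcond (eq_bigr (fun al => if (mdeg (nat_ffun al) <= j)%N
    then F (nat_ffun al) * psmonom z (nat_ffun al) j else 0)) => [|al _]; last first.
  case: (leqP (mdeg _) j) => [alj|jal]; first by rewrite (leq_ltn_trans alj jB).
  by case: ifP => // _; rewrite tdvd_psmonom ?mulr0.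
rewrite -big_mkcond /= (sum_ffun_narrow (fun be => F be * psmonom z be j) jB).
apply: eq_big => al //; congr (_ <= _)%N.
by apply: eq_bigr => i _; rewrite ffunE.
Qed.

Lemma eq_subst_poly B F G :
  (forall be, (mdeg be < B)%N -> F be = G be) -> subst_poly B F = subst_poly B G.
Proof. by move=> FG; apply: eq_bigr => al /FG ->. Qed.

Lemma subst_poly_sum B I (r : seq I) (G : I -> mono -> k) :
  subst_poly B (fun be => \sum_(e <- r) G e be) = \sum_(e <- r) subst_poly B (G e).
Proof.
rewrite /subst_poly exchange_big /=; apply: eq_bigr => al _.
by rewrite rmorph_sum mulr_suml.
Qed.

Definition terms_eval (p : seq (k * mono)) : ps k :=
  \sum_(x <- p) pscst x.1 * psmonom z x.2.
Definition terms_coef (p : seq (k * mono)) (be : mono) : k :=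
  \sum_(x <- p) (if x.2 == be then x.1 else 0).

Lemma subst_poly_terms B p :
  all (fun x => mdeg x.2 < B)%N p -> subst_poly B (terms_coef p) = terms_eval p.
Proof.
move=> /allP pB; rewrite subst_poly_sum big_seq [RHS]big_seq.
apply: eq_bigr => x /pB /= xB; rewrite /subst_poly.
have xiB i : (x.2 i < B)%N by apply: leq_ltn_trans xB; apply: mdeg_ge.
pose al0 : {ffun 'I_n -> 'I_B} := [ffun i => Ordinal (xiB i)].
have val_al0 : nat_ffun al0 = x.2 by apply/ffunP => i; rewrite !ffunE.
rewrite (bigD1 al0) /= ?val_al0 ?eqxx // big1 ?addr0 // => al /andP [_ al_al0].
rewrite ifN ?rmorph0 ?mul0r //; apply: contra al_al0 => /eqP x_al.
apply/eqP/ffunP => i; apply: val_inj.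
by move/ffunP: x_al => /(_ i); rewrite !ffunE.
Qed.

Lemma terms_coef_homog e p be :
  all (fun x => mdeg x.2 == e) p -> mdeg be != e -> terms_coef p be = 0.
Proof.
move=> /allP pe be_e; rewrite /terms_coef big_seq big1 // => x /pe /eqP xe.
by case: eqP => // x_be; move: be_e; rewrite -x_be xe eqxx.
Qed.

Definition mulY (i : 'I_n) (x : k * mono) : k * mono :=
  (x.1, [ffun l => x.2 l + (l == i)]).

Lemma mdeg_mulY i x : mdeg (mulY i x).2 = (mdeg x.2).+1.
Proof.
rewrite /mdeg; under eq_bigr => l _ do rewrite ffunE.
rewrite big_split /= -addn1; congr (_ + _)%N.
by rewrite (bigD1 i) //= eqxx big1 // => l /negbTE ->.
Qed.

Lemma terms_eval_mulY i p : terms_eval (map (mulY i) p) = z i * terms_eval p.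
Proof.
rewrite /terms_eval big_map mulr_sumr; apply: eq_bigr => x _.
rewrite !psmonomE mulrCA; congr (_ * _).
under eq_bigr => l _ do rewrite ffunE exprD.
rewrite big_split /= mulrC; congr (_ * _).
by rewrite (bigD1 i) //= eqxx expr1 big1 ?mulr1 // => l /negbTE ->; rewrite expr0.
Qed.

Lemma terms_eval_cst e : terms_eval [:: (e, [ffun=> 0%N])] = pscst e.
Proof.
rewrite /terms_eval big_seq1 psmonomE.
by under eq_bigr => i _ do rewrite ffunE expr0; rewrite prodr_const expr1n mulr1.
Qed.

Lemma terms_eval_cat p q : terms_eval (p ++ q) = terms_eval p + terms_eval q.
Proof. by rewrite /terms_eval big_cat. Qed.

End Substitution.

Section PowerSeriesGenerators.
Variable k : fieldType.
Variable R : ps k -> Prop.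
Variable n : nat.
Variable z : 'I_n -> ps k.
Variable c : nat.
Hypothesis HR : is_ksubalg R.
Hypothesis Hc : conductor_degree R c.
Hypothesis mz : forall i, maxid R (z i).
Hypothesis z_gen :
  forall f, maxid R f -> exists2 r : 'I_n -> ps k, forall i, R (r i) & f = \sum_i r i * z i.
Implicit Types f g h : ps k.

Let z0 i : z i 0%N = 0. Proof. by case: (mz i). Qed.

Lemma ksub_pssubst F : R (pssubst F z).
Proof.
apply: (ksub_eq_mod_conductor HR Hc (g := subst_poly z c F)).
  by move=> j jc; rewrite pscoefB (pssubst_poly z0 _ jc) subrr.
apply: (ksub_sum HR) => al _; apply: (ksubM HR); first exact: ksub_cst.
by apply: (ksub_psmonom HR) => i; case: (mz i).
Qed.

Fixpoint gen_pow (e : nat) h : Prop :=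
  if e is e'.+1 then
    exists2 r : 'I_n -> ps k, forall i, gen_pow e' (r i) & h = \sum_i r i * z i
  else R h.

Lemma gen_pow_tdvd e h : gen_pow e h -> tdvd e h.
Proof.
elim: e h => [|e IH] h //= [r re ->]; apply: tdvd_sum => i _.
by rewrite -addn1; apply: tdvdM; [exact/IH | exact/tdvd1_coef0].
Qed.

Lemma gen_pow_homogeneous e h : gen_pow e h ->
  exists2 p, all (fun x => mdeg x.2 == e) p & gen_pow e.+1 (h - terms_eval z p).
Proof.
elim: e h => [|e IH] h.
  move=> Rh; exists [:: (h 0%N, [ffun=> 0%N])].
    by rewrite /= andbT /mdeg; apply/eqP/big1 => i _; rewrite ffunE.
  rewrite terms_eval_cst; apply: z_gen; split.
    by apply: (ksubB HR) => //; exact: ksub_cst.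
  by rewrite pscoefB /pscst eqxx subrr.
move=> [r re ->].
have /choice [P HP] i : exists p, all (fun x => mdeg x.2 == e) p /\
    gen_pow e.+1 (r i - terms_eval z p).
  by have [p pe rp] := IH _ (re i); exists p.
exists (\big[cat/[::]]_(i < n) map (mulY i) (P i)).
  elim/big_ind: _ => // [p q|i _]; first by rewrite all_cat => -> ->.
  by rewrite all_map; apply/allP => x /(allP (proj1 (HP i))) /= xe; rewrite mdeg_mulY.
rewrite (big_morph _ (terms_eval_cat z) (big_nil _ _ _ _)).
exists (fun i => r i - terms_eval z (P i)); first by move=> i; case: (HP i).
by rewrite -sumrB; apply: eq_bigr => i _; rewrite terms_eval_mulY mulrBl [z i * _]mulrC.
Qed.

(* Peel off homogeneous pieces [Q e] with [rest e = f - \sum_(e' < e) Q e'(z)] in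
   [(z)^e]; the coefficient of [Y^be] in [F] is read in the piece of degree [|be|]. *)
Lemma ksub_in_kser f : R f -> in_kser z f.
Proof.
move=> Rf.
have /choice [P HP] (eh : nat * ps k) : exists p, gen_pow eh.1 eh.2 ->
    all (fun x => mdeg x.2 == eh.1) p /\ gen_pow eh.1.+1 (eh.2 - terms_eval z p).
  have [/gen_pow_homogeneous [p pe hp]|Nh] := pselect (gen_pow eh.1 eh.2).
    by exists p.
  by exists [::] => /Nh.
pose fix rest e := if e is e'.+1 then rest e' - terms_eval z (P (e', rest e')) else f.
pose Q e := P (e, rest e).
have gen_rest e : gen_pow e (rest e).
  by elim: e => [|e IH]; [exact: Rf | exact: (proj2 (HP (e, rest e) IH))].
have Qe e : all (fun x => mdeg x.2 == e) (Q e).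
  exact: (proj1 (HP (e, rest e) (gen_rest e))).
have restE e : rest e = f - \sum_(e' < e) terms_eval z (Q e').
  elim: e => [|e IH]; first by rewrite big_ord0 subr0.
  by rewrite /= {1}IH big_ord_recr /= opprD addrA.
exists (fun be => terms_coef (Q (mdeg be)) be) => j.
rewrite (pssubst_poly z0 _ (ltnSn j)).
rewrite (@eq_subst_poly _ _ _ _ _ (fun be => \sum_(e < j.+1) terms_coef (Q e) be)).
  rewrite subst_poly_sum.
  have Q_lt (e : 'I_j.+1) : all (fun x => mdeg x.2 < j.+1)%N (Q e).
    by apply: sub_all (Qe e) => x /eqP ->.
  rewrite (eq_bigr (fun e : 'I_j.+1 => terms_eval z (Q e))) => [|e _]; last first.
    exact: subst_poly_terms.
  have := gen_pow_tdvd (gen_rest j.+1) (ltnSn j).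
  by rewrite restE pscoefB pscoef_sum => /eqP; rewrite subr_eq0 => /eqP.
move=> be be_j; rewrite (bigD1 (Ordinal be_j)) //= big1 ?addr0 // => e e_be.
by rewrite (terms_coef_homog (Qe e)) //; apply: contra e_be => /eqP be_e; apply/eqP/val_inj.
Qed.

Lemma ksub_kserE f : R f <-> in_kser z f.
Proof.
split=> [|[F fF]]; first exact: ksub_in_kser.
by apply: (ksub_pseq HR _ (ksub_pssubst F)) => j; rewrite fF.
Qed.

End PowerSeriesGenerators.

Theorem mainTheorem15 (k : fieldType) (R : ps k -> Prop) (n : nat)
    (y : 'I_n -> ps k) (c a : nat) :
  fin_birat_subalg R ->
  min_gens R y ->
  conductor_degree R c ->
  HK_last R a ->
  (forall f, R f <-> in_kser (fun i => trunc (maxn a.+1 c) (y i)) f) /\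
  (exists (m : nat) (p : 'I_m -> ps k),
      (forall i, is_poly (p i) /\ p i 0%N = 0%R) /\
      (forall f, R f <-> in_kser p f)).
Proof.
move=> [HR _ _] Hmin Hc Ha.
set z := fun i => trunc (maxn a.+1 c) (y i).
have mz i : maxid R (z i).
  by split; [exact: ksub_trunc HR Hmin Hc i | exact: (trunc_coef0 c a Hmin)].
have z_gen f : maxid R f ->
    exists2 r : 'I_n -> ps k, forall i, R (r i) & f = \sum_i r i * z i.
  exact: maxid_truncP HR Hmin Hc Ha f.
have RE := ksub_kserE HR Hc mz z_gen.
split=> //; exists n, z; split=> // i; split; last exact: (trunc_coef0 c a Hmin).
by exists (maxn a.+1 c) => j; rewrite /z /trunc ltnNge => ->.
Qed.
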